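(* Let $R$ be a commutative Noetherian ring, $n$ a non-negative integer and $L$ an $R$-module with $\dim L\ge n$. If $L'$ is a submodule of $L$ with $\dim L/L'\ge n$, then $$\bigcap_{\mathfrak p\in(\operatorname{Ass}_R L)_{\ge n}}\mathfrak p\ \subseteq\ \bigcap_{\mathfrak p\in(\operatorname{Ass}_R L/L')_{\ge n}}\mathfrak p.$$
   Context: For an $R$-module $L$, $\dim L=\sup\{\dim R/\mathfrak p:\mathfrak p\in\operatorname{Supp}L\}$. For a subset $T\subseteq\operatorname{Spec}R$, $(T)_{\ge n}=\{\mathfrak p\in T:\dim R/\mathfrak p\ge n\}$. *)

From HB Require Import structures.
From mathcomp Require Import all_boot all_algebra.
Set Implicit Arguments. Unset Strict Implicit. Unset Printing Implicit Defensive.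
Import GRing.Theory.
Local Open Scope ring_scope.

Section CommAlg.
Variable R : comPzRingType.

Definition is_ideal (I : R -> Prop) : Prop :=
  I 0 /\ (forall a b, I a -> I b -> I (a + b)) /\ (forall r a, I a -> I (r * a)).

Definition is_prime_ideal (P : R -> Prop) : Prop :=
  is_ideal P /\ ~ P 1 /\ (forall a b, P (a * b) -> P a \/ P b).

Definition noetherian_ring : Prop :=
  forall I : nat -> R -> Prop,
    (forall k, is_ideal (I k)) ->
    (forall k x, I k x -> I k.+1 x) ->
    exists N, forall m, (N <= m)%N -> forall x, I m x <-> I N x.

(* dim R/p >= n : there is a chain of primes p = p_0 ⊊ p_1 ⊊ ... ⊊ p_n. *)
Definition dim_quot_ge (p : R -> Prop) (n : nat) : Prop :=
  exists c : nat -> R -> Prop,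
    (forall x, c 0%N x <-> p x) /\
    (forall i, (i <= n)%N -> is_prime_ideal (c i)) /\
    (forall i, (i < n)%N ->
       (forall x, c i x -> c i.+1 x) /\ exists x, c i.+1 x /\ ~ c i x).

Variable V : lmodType R.

Definition is_submodule (N : V -> Prop) : Prop :=
  N 0 /\ (forall u v, N u -> N v -> N (u + v)) /\ (forall r v, N v -> N (r *: v)).

(* Everything below concerns the quotient module V / N for a submodule N;
   taking N = {0} gives the module V itself. *)

(* p ∈ Ass(V/N): p is prime and p = ann(x + N) for some x. *)
Definition Ass_quot (N : V -> Prop) (p : R -> Prop) : Prop :=
  is_prime_ideal p /\ exists x : V, forall r, p r <-> N (r *: x).

(* p ∈ Supp(V/N): p is prime and (V/N)_p <> 0, i.e. some x/1 is nonzero in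
   the localization: no t ∉ p kills the class of x. *)
Definition Supp_quot (N : V -> Prop) (p : R -> Prop) : Prop :=
  is_prime_ideal p /\ exists x : V, forall t, ~ p t -> ~ N (t *: x).

(* dim (V/N) >= n  (dim = sup over the support of dim R/p) *)
Definition dim_quot_ge_mod (N : V -> Prop) (n : nat) : Prop :=
  exists p, Supp_quot N p /\ dim_quot_ge p n.

Definition zero_sub : V -> Prop := fun v => v = 0.

End CommAlg.

From HB Require Import structures.
From mathcomp Require Import all_boot all_algebra.
From Stdlib Require Import Classical ClassicalEpsilon.
Import GRing.Theory.
Local Open Scope ring_scope.

(* If p = ann(x + L') is associated to L/L', then ann(x) is contained in p.
   Over a Noetherian ring, an annihilator ann(c x) maximal among those
   contained in p is prime, so it is an associated prime q of L with q ⊆ p.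
   Replacing p by q at the bottom of a chain of primes gives dim R/q >= dim R/p. *)

Lemma noetherian_maximal {R : comPzRingType} {T : Type}
    (I : T -> R -> Prop) (S : T -> Prop) (t1 : T) :
  noetherian_ring R -> (forall t, is_ideal (I t)) -> S t1 ->
  exists t0, S t0 /\
    forall t, S t -> (forall a, I t0 a -> I t a) -> forall a, I t a -> I t0 a.
Proof.
move=> noethR idealI St1; apply: NNPP => no_max.
have grow t : exists t', S t -> [/\ S t', forall a, I t a -> I t' a
                                 & exists a, I t' a /\ ~ I t a].
  have [St|nSt] := classic (S t); last by exists t.
  apply: NNPP => no_bigger; apply: no_max; exists t; split=> // t' St' sub a It'a.
  apply: NNPP => nIta; apply: no_bigger; exists t' => _; split=> //.
  by exists a.
have [g gP] := choice _ grow.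
pose f k := iter k g t1.
have Sf k : S (f k) by elim: k => [|k IHk] //=; case: (gP _ IHk).
have [N stable] := noethR (fun k => I (f k)) (fun k => idealI _)
  (fun k => let: And3 _ sub _ := gP _ (Sf k) in sub).
have [_ _ [a [Ia nIa]]] := gP _ (Sf N).
by apply: nIa; apply/(stable N.+1 (leqnSn N)).
Qed.

Lemma dim_quot_ge_sub {R : comPzRingType} {p q : R -> Prop} {n : nat} :
  is_prime_ideal q -> (forall a, q a -> p a) -> dim_quot_ge p n -> dim_quot_ge q n.
Proof.
move=> primeq qp [c [c0p [primec chainc]]].
exists (fun i => if i is 0%N then q else c i); split=> //; split.
  by case=> [|i] // /primec.
case=> [|i] lt_in; last exact: chainc.
have [sub [z [c1z nc0z]]] := chainc 0%N lt_in; split.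
  by move=> a /qp /c0p /sub.
by exists z; split=> // /qp /c0p.
Qed.

Section Annihilator.
Context {R : comPzRingType} {V : lmodType R}.

Definition ann (x : V) (a : R) : Prop := a *: x = 0.

Lemma ann_ideal (x : V) : is_ideal (ann x).
Proof.
rewrite /ann; split; first by rewrite scale0r.
split; first by move=> a b ax bx; rewrite scalerDl ax bx addr0.
by move=> r a ax; rewrite -scalerA ax scaler0.
Qed.

Lemma annZ (x : V) (c a : R) : ann (c *: x) a <-> ann x (a * c).
Proof. by rewrite /ann scalerA. Qed.

Lemma ann_subZ (x : V) (c a : R) : ann x a -> ann (c *: x) a.
Proof. by rewrite /ann scalerA mulrC -scalerA => ->; rewrite scaler0. Qed.

Lemma ann_quot_sub {N : V -> Prop} {p : R -> Prop} :
  is_submodule N -> Ass_quot N p -> exists x, forall a, ann x a -> p a.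
Proof. by move=> [N0 _] [_ [x px]]; exists x => a ax; apply/px; rewrite ax. Qed.

Lemma Ass_ann {y : V} : is_prime_ideal (ann y) -> Ass_quot (@zero_sub R V) (ann y).
Proof. by move=> primey; split=> //; exists y. Qed.

Section MaximalAnnihilator.
Context {p : R -> Prop} {x : V} {c0 : R}.
Hypotheses (primep : is_prime_ideal p) (ann_c0_sub : forall a, ann (c0 *: x) a -> p a).
Hypothesis ann_c0_max : forall c, (forall a, ann (c *: x) a -> p a) ->
  (forall a, ann (c0 *: x) a -> ann (c *: x) a) -> forall a, ann (c *: x) a -> ann (c0 *: x) a.

Lemma ann_notinZ_sub (t : R) : ~ p t -> forall a, ann ((t * c0) *: x) a -> p a.
Proof.
move=> npt a /annZ; rewrite mulrA => /annZ /ann_c0_sub pat.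
by case: primep => _ [_ /(_ a t pat)] [].
Qed.

Lemma ann_max_prime : is_prime_ideal (ann (c0 *: x)).
Proof.
split; first exact: ann_ideal.
split; first by move=> /ann_c0_sub; case: primep => _ [].
have ann_c0Z c u : ann (c0 *: x) u -> ann ((c * c0) *: x) u.
  by rewrite -scalerA; apply: ann_subZ.
move=> a b /annZ; rewrite [a * b]mulrC -mulrA => /annZ bac0.
have [ac0|nac0] := classic (ann (c0 *: x) a); [by left | right].
(* ann(a c0 x) ⊆ p: otherwise some t ∉ p kills a c0 x, and ann(t c0 x),
   which lies in p, contains both ann(c0 x) and a, so maximality gives a ∈ ann(c0 x). *)
apply: (ann_c0_max _ _ (ann_c0Z a) _ bac0) => t tac0.
apply: NNPP => npt; apply: nac0.
apply: (ann_c0_max _ (ann_notinZ_sub _ npt) (ann_c0Z t)).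
by apply/annZ; rewrite mulrA [a * t]mulrC -mulrA; apply/annZ.
Qed.

End MaximalAnnihilator.

Lemma prime_ann_sub {p : R -> Prop} {x : V} :
  noetherian_ring R -> is_prime_ideal p -> (forall a, ann x a -> p a) ->
  exists y, is_prime_ideal (ann y) /\ forall a, ann y a -> p a.
Proof.
move=> noethR primep sub_x.
have sub_1x : forall a, ann (1 *: x) a -> p a by rewrite scale1r.
have [c0 [sub_c0 max_c0]] := noetherian_maximal (fun c => ann (c *: x))
  (fun c => forall a, ann (c *: x) a -> p a) 1 noethR (fun c => ann_ideal _) sub_1x.
by exists (c0 *: x); split; [exact: (ann_max_prime primep sub_c0 max_c0) | exact: sub_c0].
Qed.

End Annihilator.

Theorem lemma2p5 (R : comPzRingType) (V : lmodType R) (n : nat)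
    (L' : V -> Prop) :
  noetherian_ring R ->
  dim_quot_ge_mod (@zero_sub R V) n ->
  is_submodule L' ->
  dim_quot_ge_mod L' n ->
  forall r : R,
    (forall p, Ass_quot (@zero_sub R V) p -> dim_quot_ge p n -> p r) ->
    (forall p, Ass_quot L' p -> dim_quot_ge p n -> p r).
Proof.
move=> noethR _ subL' _ r r_in_Ass p Ass_p dim_p.
have [x sub_x] := ann_quot_sub subL' Ass_p.
have [y [primey sub_y]] := prime_ann_sub noethR (proj1 Ass_p) sub_x.
have dim_y : dim_quot_ge (ann y) n := dim_quot_ge_sub primey sub_y dim_p.
exact: sub_y _ (r_in_Ass _ (Ass_ann primey) dim_y).
Qed.
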